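(* Under the DIMPLE-GDPG model with Assumptions A1, A3, A4, A5, A6, define for each $m\in[M]$ $$\mathbf{H}^{(m)}=L_m^{-1/2}\sum_{l:\,c(l)=m}(\mathbf{P}^{(l)})^2.$$ Then $\mathbf{H}^{(m)}=\mathbf{V}^{(m)}\big(L_m^{-1/2}\sum_{c(l)=m}(\mathbf{Q}^{(l)})^2\big)(\mathbf{V}^{(m)})^T$ and there is a constant $C>0$ depending only on the constants in the assumptions such that $$\sigma_{K_m}(\mathbf{H}^{(m)})\ \ge\ C\,\frac{n^2\rho_n^2\sqrt{L}}{K^2\sqrt{M}}\qquad\text{for all } m\in[M].$$
   Context: DIMPLE-GDPG model: surjective $c:[L]\to[M]$, $L_m=|\{l:c(l)=m\}|$; for each $m$, $\mathbf{V}^{(m)}\in\mathbb{R}^{n\times K_m}$ with orthonormal columns; for each $l$, a symmetric $\mathbf{Q}^{(l)}\in\mathbb{R}^{K_m\times K_m}$, $m=c(l)$, with $\mathbf{P}^{(l)}=\mathbf{V}^{(m)}\mathbf{Q}^{(l)}(\mathbf{V}^{(m)})^T\in[0,1]^{n\times n}$. $K=\max_mK_m$. $\sigma_k$ is the $k$-th largest singular value; $\|\mathbf{X}\|_\infty$ the maximum absolute entry. Assumptions (absolute positive constants): A1: $C_KK\le K_m\le K$ and $\underline{c}L/M\le L_m\le\bar cL/M$; A3: $\mathbf{P}^{(l)}=\rho_{n,l}\mathbf{P}_0^{(l)}$, $\|\mathbf{P}_0^{(l)}\|_\infty=1$, $\min_l\rho_{n,l}\ge C_\rho n^{-1}\log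 n$; A4: $\sigma_{K_m}(\mathbf{Q}^{(l)})/\sigma_1(\mathbf{Q}^{(l)})\ge C_\lambda\in(0,1)$; A5: $\underline{c}_\rho\rho_n\le\rho_{n,l}\le\bar c_\rho\rho_n$ with $\rho_n=L^{-1}\sum_l\rho_{n,l}$; A6: $\|\mathbf{P}_0^{(l)}\|_F^2\ge C_{0,P}^2K^{-1}n^2$. *)

From HB Require Import structures.
From mathcomp Require Import all_boot all_order all_algebra.
From mathcomp Require Import reals exp.
From mathcomp Require Import polyrcf.
Set Implicit Arguments. Unset Strict Implicit. Unset Printing Implicit Defensive.
Import Order.TTheory GRing.Theory Num.Theory.
Local Open Scope ring_scope.

Section Defs.
Variable R : rcfType.

Definition maxabs {p q : nat} (A : 'M[R]_(p, q)) : R :=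
  \big[Num.max/0]_(i < p) \big[Num.max/0]_(j < q) `|A i j|.

Definition frob2 {p q : nat} (A : 'M[R]_(p, q)) : R :=
  \sum_(i < p) \sum_(j < q) A i j ^+ 2.

(* singular values of A, with multiplicity, in decreasing order: square roots of
   the eigenvalues (roots of the characteristic polynomial, counted with
   multiplicity) of A^T A *)
Definition sing_vals {p q : nat} (A : 'M[R]_(p, q)) : seq R :=
  let chi := char_poly (A^T *m A) in
  sort (fun x y => y <= x)
    (flatten [seq nseq (mup x chi) (Num.sqrt x) | x <- rootsR chi]).

(* sigma k A : the k-th largest singular value (k >= 1; 0 if k exceeds the number) *)
Definition sigma {p q : nat} (k : nat) (A : 'M[R]_(p, q)) : R :=
  nth 0 (sing_vals A) k.-1.

End Defs.

From HB Require Import structures.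
From mathcomp Require Import all_boot all_order all_algebra.
From mathcomp Require Import reals exp.
From mathcomp Require Import polyrcf.
From mathcomp Require Import complex spectral ring.
Set Implicit Arguments. Unset Strict Implicit. Unset Printing Implicit Defensive.
Import Order.TTheory GRing.Theory Num.Theory.
Local Open Scope ring_scope.

(* Since V^T V = 1, H = V S V^T with S = L_m^(-1/2) sum_l Q_l^2, and the K_m-th
   singular value of H is at least lambda whenever z S z^* >= lambda |z|^2 on
   C^(K_m): by Courant-Fischer, a K_m-dimensional space on which the Gram form of
   H is >= lambda^2 forces K_m singular values >= lambda.  Each symmetric Q_l
   gives z Q_l^2 z^* >= sigma_(K_m)(Q_l)^2 |z|^2, and by A4, A6 and A5
     sigma_(K_m)(Q_l)^2 >= C_lam^2 |Q_l|_F^2 / K_m = C_lam^2 rho_l^2 |P0_l|_F^2 / K_m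
                        >= C_lam^2 c_rho_lo^2 rho_n^2 C_0P^2 n^2 / K^2.
   Summing over the L_m >= c_lo L / M layers of the cluster and dividing by
   sqrt L_m leaves the factor sqrt L_m >= sqrt (c_lo L / M).  Singular values
   are handled through a unitary diagonalisation of A^T A over R[i]. *)

Section SortDecreasing.
Variable R : realDomainType.
Local Notation decr := (fun x y : R => y <= x).
Implicit Types (s : seq R) (x lam : R).

Lemma nth_sort_decr_le s i j : (i <= j < size s)%N ->
  nth 0 (sort decr s) j <= nth 0 (sort decr s) i.
Proof.
move=> /andP[le_ij lt_js].
have decr_trans : transitive decr by move=> y x z /= h1 h2; apply: le_trans h2 h1.
have sorted_s := sort_sorted (fun x y => le_total y x) s.
apply: (sorted_leq_nth decr_trans (fun x => lexx x) 0 sorted_s) => //.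
by rewrite inE size_sort (leq_ltn_trans le_ij).
by rewrite inE size_sort.
Qed.

Lemma mem_le_nth_sort_decr0 s x : x \in s -> x <= nth 0 (sort decr s) 0.
Proof.
rewrite -(mem_sort decr) => /(nthP 0)[j lt_j <-].
by apply: nth_sort_decr_le; rewrite -(size_sort decr).
Qed.

Lemma nth_sort_decr_last_le s x : x \in s -> nth 0 (sort decr s) (size s).-1 <= x.
Proof.
rewrite -(mem_sort decr) => /(nthP 0)[j]; rewrite size_sort => lt_j <-.
have s_gt0 : (0 < size s)%N by apply: leq_ltn_trans lt_j.
by apply: nth_sort_decr_le; rewrite -[(j <= _)%N]ltnS prednK // lt_j leqnn.
Qed.

Lemma count_le_nth_sort_decr s lam k : (0 < k <= count (>= lam) s)%N ->
  lam <= nth 0 (sort decr s) k.-1.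
Proof.
move=> /andP[k_gt0 k_le]; set t := sort decr s.
have k_lt : (k.-1 < size s)%N by rewrite prednK // (leq_trans k_le) ?count_size.
rewrite leNgt; apply/negP => nth_lt.
have drop_lt : count (>= lam) (drop k.-1 t) = 0%N.
  apply/eqP; rewrite -leqn0 leqNgt -has_count; apply/hasPn => x.
  move/(nthP 0) => [j]; rewrite size_drop size_sort nth_drop => lt_j <-.
  rewrite -ltNge; apply: le_lt_trans nth_lt; apply: nth_sort_decr_le.
  by rewrite leq_addr -ltn_subRL.
have := permP (permEl (perm_sort decr s)) (>= lam).
rewrite -/t -(cat_take_drop k.-1 t) count_cat drop_lt addn0 => count_eq.
have := count_size (>= lam) (take k.-1 t).
rewrite count_eq size_take size_sort k_lt => count_le.
by move: (leq_trans k_le count_le); rewrite leqNgt prednK ?leqnn.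
Qed.

End SortDecreasing.

Lemma exists_nonzero_row_vanishing_on (F : fieldType) k n (W : 'M[F]_(k, n)) (js : seq 'I_n) :
  (size js < k)%N -> exists2 z : 'rV_k, z != 0 & forall i, i \in js -> (z *m W) 0 i = 0.
Proof.
move=> js_lt; set t := in_tuple js.
pose E : 'M[F]_(n, size js) := \matrix_(i, j) (i == tnth t j)%:R.
have rk_lt : (\rank (W *m E) < k)%N.
  by apply: leq_ltn_trans js_lt; apply: leq_trans (mxrankM_maxr _ _) (rank_leq_col _).
have /rowV0Pn[z /sub_kermxP zWE0 z_neq0] : kermx (W *m E) != 0.
  by rewrite -mxrank_eq0 mxrank_ker subn_eq0 -ltnNge.
exists z => // i /(tnthP t)[j ->].
move/matrixP: zWE0 => /(_ 0 j); rewrite mulmxA mxE [RHS]mxE => <-.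
have E_entry l : E l j = (l == tnth t j)%:R by rewrite mxE.
rewrite (bigD1 (tnth t j)) //= E_entry eqxx mulr1 big1 ?addr0 // => l /negbTE ne_l.
by rewrite E_entry ne_l mulr0.
Qed.

Section OrthonormalConjugation.
Variable R : comNzRingType.

Lemma sum_sqr_conj_orth (I : finType) (P : pred I) n k (V : 'M[R]_(n, k))
    (Q : I -> 'M[R]_k) (a : R) : V^T *m V = 1%:M ->
  a *: \sum_(i | P i) (V *m Q i *m V^T *m (V *m Q i *m V^T)) =
  V *m (a *: \sum_(i | P i) (Q i *m Q i)) *m V^T.
Proof.
move=> VtV; rewrite -scalemxAr -scalemxAl mulmx_sumr mulmx_suml; congr (_ *: _).
by apply: eq_bigr => i _; rewrite !mulmxA -(mulmxA _ V^T V) VtV mulmx1.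
Qed.

End OrthonormalConjugation.

Lemma char_poly_similar (F : fieldType) n (P D : 'M[F]_n) : P \in unitmx ->
  char_poly (invmx P *m D *m P) = char_poly D.
Proof.
move=> P_unit; rewrite /char_poly /char_poly_mx.
set Pc := map_mx polyC P; set Pic := map_mx polyC (invmx P).
have PicPc : Pic *m Pc = 1%:M by rewrite -map_mxM mulVmx // map_mx1.
have -> : 'X%:M - map_mx polyC (invmx P *m D *m P) =
          Pic *m ('X%:M - map_mx polyC D) *m Pc.
  by rewrite !map_mxM mulmxBr mulmxBl mul_mx_scalar -scalemxAl PicPc scalemx1.
by rewrite !det_mulmx mulrAC -det_mulmx PicPc det1 mul1r.
Qed.

Lemma sumn_map_eqmul (T : eqType) (r : seq T) (y : T) (f : T -> nat) :
  sumn [seq ((x == y) * f x)%N | x <- r] = (count_mem y r * f y)%N.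
Proof. by elim: r => //= x r ->; case: eqVneq => [->|]; rewrite ?mul1n ?mul0n. Qed.

Section SingularValues.
Variable R : rcfType.
Local Notation decr := (fun x y : R => y <= x).

Lemma perm_flatten_mup_rootsR (s : seq R) (p := \prod_(a <- s) ('X - a%:P)) :
  perm_eq (flatten [seq nseq (mup x p) x | x <- rootsR p]) s.
Proof.
have p_neq0 : p != 0 by apply/monic_neq0/monic_prod_XsubC.
apply/allP => y _; apply/eqP; rewrite count_flatten -map_comp.
rewrite (eq_map (g := fun x => ((x == y) * mup x p)%N)); last first.
  by move=> x /=; rewrite count_nseq /= eq_sym.
rewrite sumn_map_eqmul /p mu_prod_XsubC.
have [y_root|y_nroot] := boolP (y \in rootsR p).
  by rewrite (count_uniq_mem _ (uniq_roots _ _ _)) y_root mul1n.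
rewrite (count_memPn y_nroot) mul0n -(mu_prod_XsubC y s) mupNroot //.
by apply: contra y_nroot => y_root; rewrite -(roots_on_rootsR p_neq0) in_itv.
Qed.

Lemma sing_vals_char_poly p q (A : 'M[R]_(p, q)) (s : seq R) :
  char_poly (A^T *m A) = \prod_(a <- s) ('X - a%:P) ->
  sing_vals A = sort decr (map Num.sqrt s).
Proof.
move=> chiE; rewrite /sing_vals /= chiE; apply/perm_sortP.
- by move=> x y; rewrite le_total.
- by move=> x y z /= yx zy; apply: le_trans zy yx.
- by move=> x y /andP[? ?]; apply/le_anti/andP.
have map_flatten_nseq (f : R -> R) (g : R -> nat) r :
    map f (flatten [seq nseq (g x) x | x <- r]) = flatten [seq nseq (g x) (f x) | x <- r].
  by elim: r => //= x r <-; rewrite map_cat map_nseq.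
by rewrite -map_flatten_nseq; apply/perm_map/perm_flatten_mup_rootsR.
Qed.

Local Notation C := R[i].
Local Notation toC := (real_complex R).
Local Notation mxC := (map_mx toC).
Local Open Scope sesquilinear_scope.

Lemma conjC_real (x : R) : (toC x)^* = toC x.
Proof. exact: conjc_real. Qed.

Lemma conjmx_real p q (A : 'M[R]_(p, q)) : (mxC A)^t* = mxC A^T.
Proof. by apply/matrixP => i j; rewrite !mxE conjC_real. Qed.

Lemma gram_spectral p q (A : 'M[R]_(p, q)) :
  exists (P : 'M[C]_q) (e : 'I_q -> R),
  [/\ P \is unitarymx, forall i, 0 <= e i,
      mxC (A^T *m A) = P^t* *m diag_mx (\row_i toC (e i)) *m P &
      sing_vals A = sort decr [seq Num.sqrt (e i) | i <- enum 'I_q]].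
Proof.
set G := mxC (A^T *m A).
have G_normal : G \is normalmx.
  by apply/normalmxP; rewrite /G conjmx_real trmx_mul trmxK.
have := orthomx_spectralP G_normal.
set P := spectralmx G; set d := spectral_diag G => GE.
have P_unitary : P \is unitarymx by apply: spectral_unitarymx.
rewrite invmx_unitary // in GE.
set B := P *m (mxC A)^T.
(* The eigenvalues of the Gram matrix are the squared row norms of B. *)
have dE : diag_mx d = B *m B^t*.
  have -> : diag_mx d = P *m G *m P^t*.
    by rewrite GE !mulmxA (unitarymxP _) // mul1mx mulmxtVK.
  rewrite /B trmx_mul map_mxM !mulmxA -(mulmxA P) /G map_mxM map_trmx.
  by rewrite -map_trmx conjmx_real trmxK !mulmxA.
have d_ge0 i : 0 <= d 0 i.
  move/matrixP: dE => /(_ i i); rewrite mxE eqxx mulr1n => ->.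
  by rewrite mxE; apply: sumr_ge0 => j _; rewrite !mxE mul_conjC_ge0.
pose e i := complex.Re (d 0 i).
have dE' i : d 0 i = toC (e i) by rewrite RRe_real // ger0_real.
exists P, e; split => //.
- by move=> i; rewrite -ler0c -dE'.
- by rewrite -/G GE; congr (_ *m diag_mx _ *m _); apply/rowP => i; rewrite !mxE dE'.
rewrite (@sing_vals_char_poly _ _ _ [seq e i | i <- enum 'I_q]); first by rewrite -map_comp.
rewrite big_map big_enum /=; apply: (map_poly_inj toC).
rewrite map_char_poly -/G GE -invmx_unitary //.
rewrite char_poly_similar ?unitarymx_unit // char_poly_trig ?diag_mx_is_trig //.
rewrite rmorph_prod; apply: eq_bigr => i _.
by rewrite mxE eqxx mulr1n dE' /= map_polyXsubC.
Qed.

Local Notation "''[' u , v ]" := (dotmx u v) : ring_scope.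
Local Notation "''[' u ]" := (dotmx u u) : ring_scope.

Lemma dotmx_sum_sqr n (w : 'rV[C]_n) : '[w] = \sum_i `|w 0 i| ^+ 2.
Proof. by rewrite dotmxE mxE; apply: eq_bigr => i _; rewrite !mxE normCK. Qed.

Lemma dotmx_mul_unitary k n (W : 'M[C]_(k, n)) (z : 'rV[C]_k) :
  W \is unitarymx -> '[z *m W] = '[z].
Proof. by move=> W_unitary; rewrite !dotmxE trmx_mul map_mxM mulmxA mulmxtVK. Qed.

Lemma dotmx_gram p q (A : 'M[R]_(p, q)) (P : 'M[C]_q) (e : 'I_q -> R) (y : 'rV[C]_q) :
  mxC (A^T *m A) = P^t* *m diag_mx (\row_i toC (e i)) *m P ->
  '[y *m mxC A^T] = \sum_i toC (e i) * `|(y *m P^t*) 0 i| ^+ 2.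
Proof.
move=> gramE; rewrite dotmxE trmx_mul map_mxM conjmx_real trmxK.
rewrite mulmxA -(mulmxA y) -map_mxM gramE !mulmxA -(mulmxA _ P).
have -> : P *m y^t* = (y *m P^t*)^t* by rewrite trmx_mul map_mxM trmxCK.
rewrite mul_mx_diag mxE; apply: eq_bigr => i _.
by rewrite !mxE normCK mulrAC mulrC.
Qed.

Lemma sigma_ge0 p q (A : 'M[R]_(p, q)) k : 0 <= sigma k A.
Proof.
have [P [e [_ _ _ svE]]] := gram_spectral A.
rewrite /sigma svE; set s := sort _ _.
have [lt_k|] := ltnP k.-1 (size s); last by move=> ?; rewrite nth_default.
have : nth 0 s k.-1 \in [seq Num.sqrt (e i) | i <- enum 'I_q].
  by rewrite -(mem_sort decr) mem_nth.
by case/mapP => i _ ->; rewrite sqrtr_ge0.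
Qed.

Lemma sigma_min_sqr_dotmx_le p q (A : 'M[R]_(p, q)) (z : 'rV[C]_q) :
  toC (sigma q A ^+ 2) * '[z] <= '[z *m mxC A^T].
Proof.
have [P [e [P_unitary e_ge0 gramE svE]]] := gram_spectral A.
rewrite (dotmx_gram _ gramE) -(dotmx_mul_unitary z (_ : P^t* \is unitarymx)).
  rewrite dotmx_sum_sqr mulr_sumr; apply: ler_sum => i _.
  rewrite ler_wpM2r ?exprn_ge0 ?normr_ge0 // lecR -(sqr_sqrtr (e_ge0 i)).
  rewrite lerXn2r ?nnegrE ?sigma_ge0 ?sqrtr_ge0 //.
  rewrite /sigma svE.
  have := nth_sort_decr_last_le (s := [seq Num.sqrt (e i) | i <- enum 'I_q]).
  by rewrite size_map size_enum_ord; apply; apply: map_f; rewrite mem_enum.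
by have := trmxC_unitary P; rewrite P_unitary.
Qed.

Lemma frob2_tr p q (A : 'M[R]_(p, q)) : frob2 A = \tr (A^T *m A).
Proof.
rewrite /frob2 /mxtrace exchange_big; apply: eq_bigr => j _.
by rewrite mxE; apply: eq_bigr => i _; rewrite !mxE expr2.
Qed.

Lemma frob2_le_sigma1_sqr p q (A : 'M[R]_(p, q)) : frob2 A <= q%:R * sigma 1 A ^+ 2.
Proof.
have [P [e [P_unitary e_ge0 gramE svE]]] := gram_spectral A.
have frob2E : frob2 A = \sum_i e i.
  apply: (@complexI R); rewrite frob2_tr /mxtrace !rmorph_sum.
  transitivity (\tr (mxC (A^T *m A))).
    by rewrite /mxtrace; apply: eq_bigr => i _; rewrite [RHS]mxE.
  rewrite gramE mxtrace_mulC mulmxA (unitarymxP _) // mul1mx mxtrace_diag.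
  by apply: eq_bigr => i _; rewrite mxE.
rewrite frob2E mulr_natl -[q in _ *+ q]card_ord -sumr_const; apply: ler_sum => i _.
rewrite -(sqr_sqrtr (e_ge0 i)) lerXn2r ?nnegrE ?sigma_ge0 ?sqrtr_ge0 // /sigma svE.
by apply: mem_le_nth_sort_decr0; apply: map_f; rewrite mem_enum.
Qed.

Lemma unitarymx_orth_real n k (V : 'M[R]_(n, k)) : V^T *m V = 1%:M -> mxC V^T \is unitarymx.
Proof. by move=> VtV; apply/unitarymxP; rewrite conjmx_real trmxK -map_mxM VtV map_mx1. Qed.

Lemma dotmx_weighted_lt n (w : 'rV[C]_n) (e : 'I_n -> R) (c : R) :
  w != 0 -> (forall i, w 0 i != 0 -> e i < c) ->
  \sum_i toC (e i) * `|w 0 i| ^+ 2 < toC c * '[w].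
Proof.
move=> w_neq0 e_lt; rewrite dotmx_sum_sqr mulr_sumr.
have [i0 wi0_neq0] : exists i0, w 0 i0 != 0.
  apply/existsP; apply: contraR w_neq0 => /existsPn w0.
  by apply/eqP/rowP => i; rewrite mxE; apply/eqP/negPn.
rewrite (bigD1 i0) //= [X in _ < X](bigD1 i0) //=; apply: ltr_leD.
  by rewrite ltr_pM2r ?exprn_gt0 ?normr_gt0 // ltcR e_lt.
apply: ler_sum => i _; have [->|wi_neq0] := eqVneq (w 0 i) 0.
  by rewrite normr0 expr0n !mulr0.
by rewrite ler_wpM2r ?exprn_ge0 ?normr_ge0 // lecR ltW ?e_lt.
Qed.

(* If fewer than k eigenvalues e_i of A^T A had sqrt e_i >= lam, some nonzero z
   would make z W orthogonal to all their eigenvectors, and then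
   '[z W A^T] < lam^2 '[z]. *)
Lemma sigma_ge_of_dotmx_ge p q k (A : 'M[R]_(p, q)) (W : 'M[C]_(k, q)) (lam : R) :
  (0 < k)%N -> W \is unitarymx -> 0 <= lam ->
  (forall z : 'rV[C]_k, toC (lam ^+ 2) * '[z] <= '[z *m W *m mxC A^T]) ->
  lam <= sigma k A.
Proof.
move=> k_gt0 W_unitary lam_ge0 lam_le.
have [P [e [P_unitary e_ge0 gramE svE]]] := gram_spectral A.
set js := [seq i <- enum 'I_q | lam <= Num.sqrt (e i)].
suff k_le : (k <= size js)%N.
  by rewrite /sigma svE count_le_nth_sort_decr // k_gt0 count_map -size_filter.
rewrite leqNgt; apply/negP => js_lt.
have [z z_neq0 zWP0] := exists_nonzero_row_vanishing_on (W *m P^t*) js_lt.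
have WP_unitary : W *m P^t* \is unitarymx by rewrite mul_unitarymx ?trmxC_unitary.
set w := z *m (W *m P^t*) in zWP0.
have w_neq0 : w != 0.
  by apply: contraNneq z_neq0 => w0; rewrite -(mulmxtVK z WP_unitary) -/w w0 mul0mx.
have e_lt i : w 0 i != 0 -> e i < lam ^+ 2.
  apply: contraNT; rewrite -leNgt -ler_sqrt // sqrtr_sqr ger0_norm // => le_e.
  by apply/eqP/zWP0; rewrite mem_filter le_e mem_enum.
have := le_lt_trans (lam_le z) _; rewrite (dotmx_gram _ gramE) -mulmxA.
rewrite -(dotmx_mul_unitary z WP_unitary) -/w => /(_ _ (dotmx_weighted_lt w_neq0 e_lt)).
by rewrite ltxx.
Qed.

Lemma dotmx_sym_sqr_ge k (S : 'M[R]_k) (z : 'rV[C]_k) (lam : R) :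
  S^T = S -> 0 <= lam -> toC lam * '[z] <= '[z *m mxC S, z] ->
  toC (lam ^+ 2) * '[z] <= '[z *m mxC S].
Proof.
move=> S_sym lam_ge0 lam_le; set u := z *m mxC S; set b := '[u, z].
have b_sym : '[z, u] = b.
  by rewrite /b !dotmxE /u trmx_mul map_mxM conjmx_real S_sym mulmxA.
have conj_lam_z : (u - toC lam *: z)^t* = u^t* - toC lam *: z^t*.
  by apply/matrixP => i j; rewrite !mxE rmorphB rmorphM /= conjC_real.
have expand :
    '[u - toC lam *: z] = '[u] - toC lam * ('[u, z] + '[z, u]) + toC lam ^+ 2 * '[z].
  rewrite !dotmxE conj_lam_z mulmxBl !mulmxBr -!scalemxAl -!scalemxAr !mxE.
  ring.
rewrite -/b b_sym in expand.
have lamC_ge0 : 0 <= toC lam by rewrite ler0c.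
have -> : '[u] = toC lam ^+ 2 * '[z] +
    ('[u - toC lam *: z] + 2%:R * (toC lam * (b - toC lam * '[z]))).
  by rewrite expand; ring.
by rewrite rmorphXn lerDl addr_ge0 ?dnorm_ge0 // !mulr_ge0 ?ler0n // subr_ge0.
Qed.

Lemma sigma_sum_sqr_conj_orth_ge (I : finType) (P : pred I) n k (V : 'M[R]_(n, k))
    (Q : I -> 'M[R]_k) (a : R) :
  (0 < k)%N -> V^T *m V = 1%:M -> 0 <= a -> (forall i, P i -> (Q i)^T = Q i) ->
  a * \sum_(i | P i) sigma k (Q i) ^+ 2 <=
  sigma k (V *m (a *: \sum_(i | P i) (Q i *m Q i)) *m V^T).
Proof.
move=> k_gt0 VtV a_ge0 Q_sym.
set S := a *: _; set lam := a * _.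
have S_sym : S^T = S.
  rewrite /S linearZ /= linear_sum; congr (_ *: _); apply: eq_bigr => i Pi.
  by rewrite /= trmx_mul Q_sym.
have lam_ge0 : 0 <= lam by rewrite mulr_ge0 ?sumr_ge0 // => i _; rewrite exprn_ge0 ?sigma_ge0.
have quad z : toC lam * '[z] <= '[z *m mxC S, z].
  have -> : '[z *m mxC S, z] = toC a * \sum_(i | P i) '[z *m mxC (Q i)].
    rewrite dotmxE /S map_mxZ raddf_sum -scalemxAr -scalemxAl mxE mulmx_sumr mulmx_suml summxE.
    congr (_ * _); apply: eq_bigr => i Pi.
    by rewrite dotmxE /= map_mxM trmx_mul map_mxM conjmx_real Q_sym // !mulmxA.
  rewrite /lam (rmorphM (real_complex R)) rmorph_sum -mulrA mulr_suml ler_wpM2l ?ler0c //.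
  by apply: ler_sum => i Pi; have := sigma_min_sqr_dotmx_le (Q i) z; rewrite Q_sym.
have Vt_unitary := unitarymx_orth_real VtV.
apply: (sigma_ge_of_dotmx_ge (W := mxC V^T)) => // z.
have -> : z *m mxC V^T *m mxC (V *m S *m V^T)^T = z *m mxC S *m mxC V^T.
  rewrite !trmx_mul trmxK S_sym !map_mxM !mulmxA -(mulmxA z) -map_mxM VtV map_mx1.
  by rewrite mulmx1.
by rewrite dotmx_mul_unitary // dotmx_sym_sqr_ge.
Qed.

End SingularValues.

Section Frobenius.
Variable R : rcfType.

Lemma frob2Z p q (a : R) (A : 'M[R]_(p, q)) : frob2 (a *: A) = a ^+ 2 * frob2 A.
Proof.
rewrite /frob2 mulr_sumr; apply: eq_bigr => i _; rewrite mulr_sumr.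
by apply: eq_bigr => j _; rewrite mxE exprMn.
Qed.

Lemma frob2_conj_orth n k (V : 'M[R]_(n, k)) (Q : 'M[R]_k) : V^T *m V = 1%:M ->
  frob2 (V *m Q *m V^T) = frob2 Q.
Proof.
move=> VtV; rewrite !frob2_tr !trmx_mul trmxK !mulmxA -(mulmxA _ V^T V) VtV mulmx1.
by rewrite mxtrace_mulC !mulmxA VtV mul1mx.
Qed.

Lemma sigma_min_sqr_ge_frob2 p q (A : 'M[R]_(p, q)) (c : R) :
  0 < c -> c <= sigma q A / sigma 1 A -> c ^+ 2 * frob2 A / q%:R <= sigma q A ^+ 2.
Proof.
move=> c_gt0 c_le; have [q0|q_gt0] := posnP q.
  by rewrite (_ : q%:R = 0) ?q0 // invr0 mulr0 sqr_ge0.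
have s1_gt0 : 0 < sigma 1 A.
  rewrite lt_def sigma_ge0 andbT; apply: contraTneq c_le => ->.
  by rewrite invr0 mulr0 -ltNge.
have le_cs : c * sigma 1 A <= sigma q A by rewrite -ler_pdivlMr.
apply: le_trans (_ : (c * sigma 1 A) ^+ 2 <= _); last first.
  by rewrite lerXn2r ?nnegrE ?mulr_ge0 ?sigma_ge0 // ltW.
rewrite exprMn -mulrA ler_wpM2l ?sqr_ge0 // ler_pdivrMr ?ltr0n // mulrC.
exact: frob2_le_sigma1_sqr.
Qed.

Lemma layer_sigma_min_sqr_ge n k K (V : 'M[R]_(n, k)) (Q : 'M[R]_k) (P0 : 'M[R]_n)
    (rho r c C0 : R) :
  V^T *m V = 1%:M -> V *m Q *m V^T = rho *: P0 ->
  0 < c -> c <= sigma k Q / sigma 1 Q -> 0 <= r <= rho ->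
  C0 ^+ 2 * K%:R^-1 * n%:R ^+ 2 <= frob2 P0 -> (0 < k <= K)%N ->
  c ^+ 2 * r ^+ 2 * C0 ^+ 2 * n%:R ^+ 2 / K%:R ^+ 2 <= sigma k Q ^+ 2.
Proof.
move=> VtV QE c_gt0 c_le /andP[r_ge0 le_r] le_frob2 /andP[k_gt0 le_kK].
apply: le_trans (sigma_min_sqr_ge_frob2 c_gt0 c_le).
rewrite -(frob2_conj_orth Q VtV) QE frob2Z.
have -> : c ^+ 2 * r ^+ 2 * C0 ^+ 2 * n%:R ^+ 2 / K%:R ^+ 2 =
    c ^+ 2 * (r ^+ 2 * (C0 ^+ 2 * K%:R^-1 * n%:R ^+ 2)) / K%:R by rewrite -exprVn; ring.
have bound_ge0 : 0 <= C0 ^+ 2 * K%:R^-1 * n%:R ^+ 2.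
  by rewrite mulr_ge0 ?sqr_ge0 // mulr_ge0 ?sqr_ge0 ?invr_ge0.
apply: ler_pM; rewrite ?invr_ge0 //.
- by rewrite mulr_ge0 ?sqr_ge0 // mulr_ge0 ?sqr_ge0.
- rewrite ler_wpM2l ?sqr_ge0 // ler_pM ?sqr_ge0 //.
  by rewrite lerXn2r ?nnegrE // (le_trans r_ge0).
- by rewrite lef_pV2 ?posrE ?ltr0n ?ler_nat // (leq_trans k_gt0).
Qed.

End Frobenius.

Lemma normalized_sum_ge (R : rcfType) (I : finType) (P : pred I) (x : I -> R)
    (B cl L M : R) :
  0 <= B -> 0 <= cl -> 0 <= L -> 0 <= M -> cl * L / M <= #|[set i | P i]|%:R ->
  (forall i, P i -> B <= x i) ->
  B * (Num.sqrt cl * Num.sqrt L / Num.sqrt M) <=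
  (Num.sqrt #|[set i | P i]|%:R)^-1 * \sum_(i | P i) x i.
Proof.
move=> B_ge0 cl_ge0 L_ge0 M_ge0; set N : R := #|_|%:R => le_N le_B.
have sum_ge : N * B <= \sum_(i | P i) x i.
  by rewrite /N cardsE mulr_natl -sumr_const; apply: ler_sum.
have invsqrtN : (Num.sqrt N)^-1 * N = Num.sqrt N.
  have [->|sN_neq0] := eqVneq (Num.sqrt N) 0; first by rewrite invr0 mul0r.
  by rewrite -{2}(sqr_sqrtr (ler0n _ _ : 0 <= N)) expr2 mulKf.
apply: le_trans (_ : (Num.sqrt N)^-1 * (N * B) <= _); last first.
  by rewrite ler_wpM2l ?invr_ge0 ?sqrtr_ge0.
rewrite [X in _ <= X]mulrA invsqrtN [X in _ <= X]mulrC ler_wpM2l //.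
by rewrite -sqrtrM // -sqrtrV // -sqrtrM ?mulr_ge0 // ler_sqrt.
Qed.

Lemma mul_ln_div_nat_ge0 (R : realType) (a : R) (n : nat) :
  0 <= a -> 0 <= a * n%:R^-1 * ln n%:R.
Proof.
case: n => [|n] a_ge0; first by rewrite invr0 mulr0 mul0r.
by rewrite !mulr_ge0 ?invr_ge0 // ln_ge0 // ler1n.
Qed.

Theorem mainTheorem8 (R : realType)
  (C_K c_lo c_hi C_rho C_lam c_rho_lo c_rho_hi C_0P : R) :
  0 < C_K -> 0 < c_lo -> 0 < c_hi -> 0 < C_rho -> 0 < C_lam < 1 ->
  0 < c_rho_lo -> 0 < c_rho_hi -> 0 < C_0P ->
  exists C : R, 0 < C /\
  forall (n L M : nat) (c : 'I_L -> 'I_M) (Km : 'I_M -> nat)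
    (V : forall m : 'I_M, 'M[R]_(n, Km m))
    (Q : forall m : 'I_M, 'I_L -> 'M[R]_(Km m))
    (rho : 'I_L -> R) (P0 : 'I_L -> 'M[R]_n),
  let K : nat := (\max_(m < M) Km m)%N in
  let Lm (m : 'I_M) : nat := #|[set l | c l == m]| in
  let P (l : 'I_L) : 'M[R]_n := V (c l) *m Q (c l) l *m (V (c l))^T in
  let rho_n : R := (L%:R)^-1 * \sum_(l < L) rho l in
  (* DIMPLE-GDPG model *)
  (forall m : 'I_M, exists l : 'I_L, c l = m) ->
  (forall m : 'I_M, (V m)^T *m V m = 1%:M) ->
  (forall l : 'I_L, (Q (c l) l)^T = Q (c l) l) ->
  (forall (l : 'I_L) (i j : 'I_n), 0 <= P l i j <= 1) ->
  (* A1 *)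
  (forall m : 'I_M, C_K * K%:R <= (Km m)%:R /\ (Km m <= K)%N) ->
  (forall m : 'I_M, c_lo * L%:R / M%:R <= (Lm m)%:R <= c_hi * L%:R / M%:R) ->
  (* A3 *)
  (forall l : 'I_L, P l = rho l *: P0 l /\ maxabs (P0 l) = 1) ->
  (forall l : 'I_L, C_rho * (n%:R)^-1 * ln (n%:R) <= rho l) ->
  (* A4 *)
  (forall l : 'I_L,
     C_lam <= sigma (Km (c l)) (Q (c l) l) / sigma 1 (Q (c l) l)) ->
  (* A5 *)
  (forall l : 'I_L, c_rho_lo * rho_n <= rho l <= c_rho_hi * rho_n) ->
  (* A6 *)
  (forall l : 'I_L, C_0P ^+ 2 * (K%:R)^-1 * (n%:R) ^+ 2 <= frob2 (P0 l)) ->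
  forall m : 'I_M,
    let H : 'M[R]_n :=
      (Num.sqrt (Lm m)%:R)^-1 *: \sum_(l < L | c l == m) (P l *m P l) in
    H = V m *m ((Num.sqrt (Lm m)%:R)^-1 *:
                  \sum_(l < L | c l == m) (Q m l *m Q m l)) *m (V m)^T /\
    C * (n%:R ^+ 2 * rho_n ^+ 2 * Num.sqrt (L%:R))
      / ((K%:R) ^+ 2 * Num.sqrt (M%:R)) <= sigma (Km m) H.
Proof.
move=> CK0 clo0 _ Crho0 /andP[Clam0 _] crl0 _ C0P0.
exists (C_lam ^+ 2 * c_rho_lo ^+ 2 * C_0P ^+ 2 * Num.sqrt c_lo).
split; first by rewrite !mulr_gt0 ?exprn_gt0 ?sqrtr_gt0.
move=> n L M c Km V Q rho P0 K Lm P rho_n _ VtV Q_sym _ A1 A1L A3 A3rho A4 A5 A6 m H.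
have HE : H = V m *m ((Num.sqrt (Lm m)%:R)^-1 *:
    \sum_(l < L | c l == m) (Q m l *m Q m l)) *m (V m)^T.
  rewrite -sum_sqr_conj_orth //; congr (_ *: _); apply: eq_bigr => l /eqP cl_m.
  by rewrite /P cl_m.
split=> //; rewrite HE.
(* For K_m = 0, A1 forces K = 0 and the bound is 0 since 0^-1 = 0. *)
have [k0|k_gt0] := posnP (Km m).
  have /eqP K0 : K == 0%N by have [+ _] := A1 m; rewrite k0 pmulr_rle0 // lern0.
  by rewrite K0 expr0n /= mul0r invr0 mulr0 sigma_ge0.
have rho_n_ge0 : 0 <= rho_n.
  apply: mulr_ge0; first by rewrite invr_ge0.
  apply: sumr_ge0 => l _.
  exact: le_trans (mul_ln_div_nat_ge0 _ (ltW Crho0)) (A3rho l).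
set B := C_lam ^+ 2 * (c_rho_lo * rho_n) ^+ 2 * C_0P ^+ 2 * n%:R ^+ 2 / K%:R ^+ 2.
have B_ge0 : 0 <= B by rewrite /B -exprVn -!exprMn sqr_ge0.
have B_le l : c l == m -> B <= sigma (Km m) (Q m l) ^+ 2.
  move=> /eqP cl_m; rewrite -cl_m.
  apply: (layer_sigma_min_sqr_ge (VtV _) (proj1 (A3 l)) Clam0 (A4 l) _ (A6 l)).
    by have /andP[le_rho _] := A5 l; rewrite le_rho mulr_ge0 ?(ltW crl0).
  by rewrite cl_m k_gt0 (proj2 (A1 m)).
have Qm_sym l : c l == m -> (Q m l)^T = Q m l by move=> /eqP <-.
have a_ge0 : 0 <= (Num.sqrt ((Lm m)%:R : R))^-1 by rewrite invr_ge0 sqrtr_ge0.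
apply: le_trans _ (sigma_sum_sqr_conj_orth_ge k_gt0 (VtV m) a_ge0 Qm_sym).
have -> : C_lam ^+ 2 * c_rho_lo ^+ 2 * C_0P ^+ 2 * Num.sqrt c_lo *
    (n%:R ^+ 2 * rho_n ^+ 2 * Num.sqrt L%:R) / (K%:R ^+ 2 * Num.sqrt M%:R) =
    B * (Num.sqrt c_lo * Num.sqrt L%:R / Num.sqrt M%:R) by rewrite /B invfM; ring.
have /andP[le_Lm _] := A1L m.
exact: normalized_sum_ge B_ge0 (ltW clo0) (ler0n _ _) (ler0n _ _) le_Lm B_le.
Qed.
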